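(* For complex numbers $x_1,\dots,x_M$ and $y_1,\dots,y_N$ with $N>M$ (pairwise distinct within each family and $x_a\ne y_b$), one has $\mathcal A^\pm_{\{y\}}\!\left[E^\mp_{\{x\}}\right]=0$.
   Context: Let $\eta\in\mathbb C\setminus\{0\}$. For a family $\{x\}=\{x_1,\dots,x_M\}$ and $y\in\mathbb C$, $E^\pm_{\{x\}}(y)=\prod_{n=1}^M\frac{y-x_n\pm\eta}{y-x_n}$. With $V(y_1,\dots,y_N)=\prod_{1\le b<a\le N}(y_a-y_b)$, for pairwise distinct $y_a$ and a function $f$ defined there, $\mathcal A^\pm_{\{y\}}[f]=\det_{1\le a,b\le N}[y_a^{b-1}-f(y_a)(y_a\pm\eta)^{b-1}]/V(y_1,\dots,y_N)$. *)

From HB Require Import structures.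
From mathcomp Require Import all_boot all_order all_algebra.
From mathcomp Require Import reals.
From mathcomp Require Export complex.
Set Implicit Arguments. Unset Strict Implicit. Unset Printing Implicit Defensive.
Import Order.TTheory GRing.Theory Num.Theory.
Local Open Scope ring_scope.
Local Open Scope complex_scope.

Definition pmsign {F : ringType} (s : bool) (eta : F) : F := if s then eta else - eta.

Definition Efun {F : fieldType} (s : bool) (eta : F) (M : nat) (x : 'I_M -> F) (y : F) : F :=
  \prod_(n < M) ((y - x n + pmsign s eta) / (y - x n)).

Definition Vand {F : fieldType} (N : nat) (y : 'I_N -> F) : F :=
  \prod_(a < N) \prod_(b < N | (b < a)%N) (y a - y b).

(* A^{pm}_{y}[f] = det[y_a^(b-1) - f(y_a) (y_a pm eta)^(b-1)] / V(y),
   with 0-based column index b (so exponent b corresponds to b-1 in 1-based). *)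
Definition Aop {F : fieldType} (s : bool) (eta : F) (N : nat) (y : 'I_N -> F)
  (f : F -> F) : F :=
  \det (\matrix_(a < N, b < N) (y a ^+ b - f (y a) * (y a + pmsign s eta) ^+ b))
  / Vand y.

From HB Require Import structures.
From mathcomp Require Import all_boot all_order all_algebra.
From mathcomp Require Import reals complex.
Import Order.TTheory GRing.Theory Num.Theory.
Local Open Scope ring_scope.
Local Open Scope complex_scope.

(* With e := ±eta and P(z) := prod_n (z - x_n - e), one has
   E^∓(z) P(z + e) = P(z) at every z off the x_n.  Since deg P = M < N, the
   coefficient vector of P is a nonzero kernel vector of the matrix
   [y_a^b - E^∓(y_a) (y_a + e)^b], so its determinant vanishes. *)

Lemma pmsign_negb (F : nzRingType) (s : bool) (eta : F) :
  pmsign (~~ s) eta = - pmsign s eta.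
Proof. by case: s; rewrite /= ?opprK. Qed.

Lemma det_pow_sub_eq0 (F : fieldType) (N : nat) (u v w : 'I_N -> F)
    (p : {poly F}) :
  p != 0 -> (size p <= N)%N -> (forall a, p.[u a] = v a * p.[w a]) ->
  \det (\matrix_(a < N, b < N) (u a ^+ b - v a * w a ^+ b)) = 0.
Proof.
move=> p_neq0 size_p p_eq; rewrite -det_tr; apply/eqP/det0P.
exists (\row_(b < N) p`_b).
  apply: contra p_neq0 => /eqP/rowP coef_p0; apply/eqP/polyP => i.
  rewrite coef0; have [iN | Ni] := ltnP i N.
    by have := coef_p0 (Ordinal iN); rewrite !mxE.
  exact: nth_default (leq_trans size_p Ni).
apply/rowP => a; rewrite !mxE.
under eq_bigr => b _ do rewrite !mxE mulrBr mulrCA.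
by rewrite sumrB -mulr_sumr -!horner_coef_wide // p_eq subrr.
Qed.

Lemma horner_prod_shift_Efun (F : fieldType) (s : bool) (eta : F) (M : nat)
    (x : 'I_M -> F) (z : F) :
  (forall n, z != x n) ->
  let p := \prod_(n < M) ('X - (x n + pmsign s eta)%:P) in
  p.[z] = Efun (~~ s) eta x z * p.[z + pmsign s eta].
Proof.
move=> zx /=; rewrite !horner_prod /Efun -big_split /=.
apply: eq_bigr => n _; rewrite !hornerE pmsign_negb.
have zxn : z - x n != 0 by rewrite subr_eq0.
have -> : z + pmsign s eta - (x n + pmsign s eta) = z - x n.
  by rewrite opprD addrACA subrr addr0.
by rewrite divfK // opprD addrA.
Qed.

Lemma Aop_Efun_eq0 {F : fieldType} (s : bool) (eta : F) {M N : nat}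
    {x : 'I_M -> F} {y : 'I_N -> F} :
  (M < N)%N -> (forall (m : 'I_M) (a : 'I_N), x m != y a) ->
  Aop s eta y (Efun (~~ s) eta x) = 0.
Proof.
move=> MN xy; rewrite /Aop.
set p := \prod_(n < M) ('X - (x n + pmsign s eta)%:P).
have size_p : size p = M.+1.
  by rewrite size_prod_XsubC /index_enum unlock /= -enumT size_enum_ord.
rewrite (@det_pow_sub_eq0 _ _ _ _ _ p) ?mul0r ?size_p //.
  by rewrite monic_neq0 // monic_prod_XsubC.
by move=> a; apply: horner_prod_shift_Efun => n; rewrite eq_sym.
Qed.

Theorem corollary2 (R : realType) (eta : R[i]) (M N : nat)
    (x : 'I_M -> R[i]) (y : 'I_N -> R[i]) :
  eta != 0 ->
  (M < N)%N ->
  injective x -> injective y ->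
  (forall (m : 'I_M) (a : 'I_N), x m != y a) ->
  Aop true eta y (Efun false eta x) = 0 /\
  Aop false eta y (Efun true eta x) = 0.
Proof.
move=> _ MN _ _ xy.
by split; [have := Aop_Efun_eq0 true eta MN xy
          | have := Aop_Efun_eq0 false eta MN xy].
Qed.
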